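(* Let $\mathfrak S$ be a commutative Noetherian semiring. Then for every set $\sigma_{\mathfrak S}$ of ideals of $\mathfrak S$, the space $\sigma_{\mathfrak S}$ with the ideal topology is a Noetherian topological space.
   Context: A semiring $(\mathfrak S,+,0,\cdot,1)$ has $(\mathfrak S,+,0)$ a commutative monoid, $(\mathfrak S,\cdot,1)$ a monoid, $0r=r0=0$, and two-sided distributivity; all semirings are commutative. An ideal is a nonempty proper subset closed under addition and under multiplication by elements of $\mathfrak S$. Noetherian semiring: every ideal is finitely generated. For an ideal $\mathfrak a$, $\mathfrak a^{\uparrow}=\{\mathfrak x\in\sigma_{\mathfrak S}\mid\mathfrak a\subseteq\mathfrak x\}$; the ideal topology on $\sigma_{\mathfrak S}$ has the sets $\mathfrak a^{\uparrow}$ ($\mathfrak a$ any ideal) as a subbasis of closed sets. A Noetherian topological space is one satisfying the descending chain condition on closed subsets. *)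

(* Commutative semirings = comPzSemiRingType (0 = 1 allowed,
   as in the paper's definition). Subsets of S are predicates S -> Prop. *)
From mathcomp Require Import all_boot all_algebra.
Set Implicit Arguments. Unset Strict Implicit. Unset Printing Implicit Defensive.
Import GRing.Theory.
Local Open Scope ring_scope.

Definition is_ideal (S : comPzSemiRingType) (a : S -> Prop) : Prop :=
  (exists x, a x) /\ (exists y, ~ a y) /\
  (forall x y, a x -> a y -> a (x + y)) /\
  (forall r x, a x -> a (r * x)).

Definition fin_span (S : comPzSemiRingType) (s : seq S) : S -> Prop :=
  fun x => exists c : 'I_(size s) -> S, x = \sum_(i < size s) c i * s`_i.

Definition finitely_generated (S : comPzSemiRingType) (a : S -> Prop) : Prop :=
  exists s : seq S, forall x, a x <-> fin_span s x.

Definition noetherian_semiring (S : comPzSemiRingType) : Prop :=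
  forall a : S -> Prop, is_ideal a -> finitely_generated a.

(* Ideal topology on sigma (a set of ideals): the sets
   a^up = {x in sigma | a ⊆ x}, a any ideal, form a subbasis of closed sets. *)
Definition ideal_up (S : comPzSemiRingType) (sigma : (S -> Prop) -> Prop)
  (a : S -> Prop) : (S -> Prop) -> Prop :=
  fun x => sigma x /\ (forall r, a r -> x r).

Definition ideal_basic_closed (S : comPzSemiRingType)
  (sigma : (S -> Prop) -> Prop) (B : (S -> Prop) -> Prop) : Prop :=
  exists (n : nat) (a : 'I_n -> (S -> Prop)),
    (forall i, is_ideal (a i)) /\
    (forall x, B x <-> exists i, ideal_up sigma (a i) x).

Definition ideal_closed (S : comPzSemiRingType)
  (sigma : (S -> Prop) -> Prop) (C : (S -> Prop) -> Prop) : Prop :=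
  exists F : ((S -> Prop) -> Prop) -> Prop,
    (forall B, F B -> ideal_basic_closed sigma B) /\
    (forall x, C x <-> (sigma x /\ forall B, F B -> B x)).

Definition ideal_topology_noetherian (S : comPzSemiRingType)
  (sigma : (S -> Prop) -> Prop) : Prop :=
  forall C : nat -> ((S -> Prop) -> Prop),
    (forall n, ideal_closed sigma (C n)) ->
    (forall n x, C n.+1 x -> C n x) ->
    exists N, forall n, (N <= n)%N -> forall x, C n x <-> C N x.

(* Noetherian induction on the ideals of S shows that the descending chain of
   closed sets stabilizes on a^up for every set a of elements; a empty gives
   the whole space.  If some C n misses a point x0 of a^up, a basic closed set
   B = a_1^up ∪ ... ∪ a_k^up contains C n but not x0, so the part of a^up in
   C n is covered by the sets a^up ∩ a_i^up.  Each of these is b_i^up for the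
   intersection b_i of its members, an ideal strictly larger than a (it
   contains an element of a_i missing from x0, hence from a), so the induction
   hypothesis applies to each of the finitely many b_i. *)
From mathcomp Require Import all_boot all_algebra.
From Stdlib Require Import Classical IndefiniteDescription.
Set Implicit Arguments. Unset Strict Implicit. Unset Printing Implicit Defensive.
Import GRing.Theory.
Local Open Scope ring_scope.

Lemma increasing_le (T : Type) (P : nat -> T -> Prop) k l x :
  (forall k x, P k x -> P k.+1 x) -> (k <= l)%N -> P k x -> P l x.
Proof.
move=> hinc /subnK <-; elim: (l - k)%N => [//|d IH] hx.
by rewrite addSn; apply: hinc; apply: IH.
Qed.

Lemma decreasing_le (T : Type) (P : nat -> T -> Prop) k l x :
  (forall k x, P k.+1 x -> P k x) -> (k <= l)%N -> P l x -> P k x.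
Proof.
move=> hdec /subnK <-; elim: (l - k)%N => [//|d IH] hx.
by apply: IH; apply: hdec; rewrite -addSn.
Qed.

Lemma wf_of_no_descending_chain (T : Type) (R : T -> T -> Prop) :
  (forall f : nat -> T, ~ (forall k, R (f k.+1) (f k))) -> well_founded R.
Proof.
move=> no_chain a0; apply: NNPP => not_acc0.
have down a : ~ Acc R a -> exists b, R b a /\ ~ Acc R b.
  move=> not_acc; apply: NNPP => none; apply: not_acc; constructor => b Rba.
  by apply: NNPP => not_accb; apply: none; exists b.
pose T' := {a | ~ Acc R a}.
have next (t : T') : {t' : T' | R (sval t') (sval t)}.
  case: t => a not_acc.
  have [b [Rba not_accb]] :=
    constructive_indefinite_description _ (down a not_acc).
  by exists (exist _ b not_accb).
pose chain k := iter k (fun t => sval (next t)) (exist _ a0 not_acc0).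
apply: (no_chain (fun k => sval (chain k))) => k.
by rewrite /chain iterS; exact: svalP (next _).
Qed.

Section SemiringIdeals.
Variable S : comPzSemiRingType.
Implicit Types (a b : S -> Prop) (s : seq S).

Lemma ideal0 a : is_ideal a -> a 0.
Proof. by move=> [[u au] [_ [_ hmul]]]; rewrite -(mul0r u); exact: hmul. Qed.

Lemma ideal_sum a n (F : 'I_n -> S) :
  is_ideal a -> (forall i, a (F i)) -> a (\sum_(i < n) F i).
Proof.
move=> ha hF; apply: (big_ind a) => //; first exact: ideal0.
by case: ha => [_ [_ [hadd _]]].
Qed.

Lemma fin_span_nth s (i : 'I_(size s)) : fin_span s s`_i.
Proof.
exists (fun j => if j == i then 1 else 0).
rewrite (bigD1 i) //= eqxx mul1r big1 ?addr0 // => j /negbTE ->.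
by rewrite mul0r.
Qed.

Lemma is_ideal_chain_union (c : nat -> S -> Prop) :
  (forall k, is_ideal (c k)) -> (forall k r, c k r -> c k.+1 r) ->
  is_ideal (fun r => exists k, c k r).
Proof.
move=> hid hinc; split; last split; last split.
- by have [[u cu] _] := hid 0%N; exists u, 0%N.
- exists 1 => -[k ck1]; have [_ [[y ncy] [_ hmul]]] := hid k.
  by apply: ncy; rewrite -(mulr1 y); apply: hmul.
- move=> x y [k ckx] [l cly]; exists (maxn k l).
  have [_ [_ [hadd _]]] := hid (maxn k l).
  by apply: hadd; [apply: increasing_le hinc (leq_maxl k l) ckx
                  | apply: increasing_le hinc (leq_maxr k l) cly].
- by move=> r x [k ckx]; exists k; have [_ [_ [_ hmul]]] := hid k; apply: hmul.
Qed.

Lemma noetherian_chain_bounded (c : nat -> S -> Prop) :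
  noetherian_semiring S ->
  (forall k, is_ideal (c k)) -> (forall k r, c k r -> c k.+1 r) ->
  exists K, forall k r, c k r -> c K r.
Proof.
move=> noeth hid hinc.
have [s spanU] := noeth _ (is_ideal_chain_union hid hinc).
have /fin_all_exists [f cf] : forall i : 'I_(size s), exists k, c k s`_i.
  by move=> i; apply/spanU; exact: fin_span_nth.
exists (\max_(i < size s) f i)%N => k r ckr.
have [coef ->] : fin_span s r by apply/spanU; exists k.
apply: ideal_sum => // i; have [_ [_ [_ hmul]]] := hid (\max_(i < size s) f i)%N.
by apply: hmul; apply: increasing_le hinc (leq_bigmax i) (cf i).
Qed.

Definition strict_superideal b a : Prop :=
  is_ideal b /\ (forall r, a r -> b r) /\ exists r, b r /\ ~ a r.

Lemma noetherian_strict_superideal_wf :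
  noetherian_semiring S -> well_founded strict_superideal.
Proof.
move=> noeth; apply: wf_of_no_descending_chain => f chain.
have [K bounded] := @noetherian_chain_bounded (fun k => f k.+1) noeth
  (fun k => (chain k).1) (fun k => (chain k.+1).2.1).
by have [_ [_ [r [fr nfr]]]] := chain K.+1; apply: nfr; apply: bounded fr.
Qed.

End SemiringIdeals.

Section StableChain.
Variables (X : Type) (C : nat -> X -> Prop).
Hypothesis C_decreasing : forall n x, C n.+1 x -> C n x.

Definition stable_on (Y : X -> Prop) : Prop :=
  exists N, forall m, (N <= m)%N -> forall x, Y x -> C N x -> C m x.

Lemma stable_on_const (Y : X -> Prop) :
  (forall n x, Y x -> C n x) -> stable_on Y.
Proof. by move=> hY; exists 0%N => m _ x Yx _; apply: hY. Qed.

Lemma stable_on_cover (Y Y' : X -> Prop) n :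
  (forall x, Y x -> C n x -> Y' x) -> stable_on Y' -> stable_on Y.
Proof.
move=> cover [N stab]; exists (maxn n N) => m hm x Yx CNx.
apply: stab; first exact: leq_trans (leq_maxr n N) hm.
- by apply: cover => //; apply: decreasing_le C_decreasing (leq_maxl n N) CNx.
- exact: decreasing_le C_decreasing (leq_maxr n N) CNx.
Qed.

Lemma stable_on_finite_union k (Y : 'I_k -> X -> Prop) :
  (forall i, stable_on (Y i)) -> stable_on (fun x => exists i, Y i x).
Proof.
move=> /fin_all_exists [N stab].
exists (\max_(i < k) N i)%N => m hm x [i Yix] CNx.
have le_max := leq_bigmax i : (N i <= \max_(i < k) N i)%N.
apply: stab Yix _; first exact: leq_trans le_max hm.
exact: decreasing_le C_decreasing le_max CNx.
Qed.

End StableChain.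

Section IdealTopology.
Variables (S : comPzSemiRingType) (sigma : (S -> Prop) -> Prop).
Hypothesis sigma_ideal : forall x, sigma x -> is_ideal x.
Implicit Types (a A : S -> Prop) (x : S -> Prop) (C : (S -> Prop) -> Prop).

Lemma ideal_closed_sub C x : ideal_closed sigma C -> C x -> sigma x.
Proof. by move=> [F [_ defC]] /defC []. Qed.

Lemma ideal_closed_separate C x0 :
  ideal_closed sigma C -> sigma x0 -> ~ C x0 ->
  exists k (a : 'I_k -> S -> Prop),
    (forall x, C x -> exists i, ideal_up sigma (a i) x) /\
    (forall i, ~ ideal_up sigma (a i) x0).
Proof.
move=> [F [Fbasic defC]] sx0 nCx0.
have [B [FB nBx0]] : exists B, F B /\ ~ B x0.
  apply: NNPP => none; apply/nCx0/defC; split=> // B FB.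
  by apply: NNPP => nBx0; apply: none; exists B.
have [k [a [_ defB]]] := Fbasic B FB.
exists k, a; split=> [x /defC [_ /(_ B FB) /defB] // | i a_x0].
by apply/nBx0/defB; exists i.
Qed.

Definition ideal_hull A : S -> Prop :=
  fun r => forall x, ideal_up sigma A x -> x r.

Lemma ideal_up_hull A x : ideal_up sigma (ideal_hull A) x <-> ideal_up sigma A x.
Proof.
split=> [[sx hull_x] | [sx A_x]]; split=> // r.
- by move=> Ar; apply: hull_x => y [_]; apply.
- by move=> hull_r; apply: hull_r.
Qed.

Lemma is_ideal_hull A x0 : ideal_up sigma A x0 -> is_ideal (ideal_hull A).
Proof.
move=> upx0; have [_ [[v nv] _]] := sigma_ideal upx0.1.
split; last split; last split.
- by exists 0 => x [sx _]; exact: ideal0 (sigma_ideal sx).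
- by exists v => hull_v; apply: nv; exact: hull_v upx0.
- move=> u w hu hw x upx; have [_ [_ [hadd _]]] := sigma_ideal upx.1.
  by apply: hadd; [apply: hu | apply: hw].
- move=> r u hu x upx; have [_ [_ [_ hmul]]] := sigma_ideal upx.1.
  by apply: hmul; apply: hu.
Qed.

Variable C : nat -> (S -> Prop) -> Prop.
Hypothesis C_closed : forall n, ideal_closed sigma (C n).
Hypothesis C_decreasing : forall n x, C n.+1 x -> C n x.

Lemma stable_on_up_union a a' :
  (forall b, strict_superideal b a -> stable_on C (ideal_up sigma b)) ->
  (exists r, a' r /\ ~ a r) ->
  stable_on C (ideal_up sigma (fun r => a r \/ a' r)).
Proof.
move=> IH [r [a'r nar]]; set A := fun r => a r \/ a' r.
case: (classic (exists x0, ideal_up sigma A x0)) => [[x0 upx0] | empty].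
  apply: (stable_on_cover C_decreasing (n := 0%N)) (IH (ideal_hull A) _).
    by move=> x /ideal_up_hull.
  split; first exact: is_ideal_hull upx0.
  split=> [u au x [_] | ]; first by apply; left.
  by exists r; split=> // x [_]; apply; right.
by apply: stable_on_const => n x upx; case: empty; exists x.
Qed.

Lemma stable_on_ideal_up :
  noetherian_semiring S -> forall a, stable_on C (ideal_up sigma a).
Proof.
move=> noeth a; elim: (noetherian_strict_superideal_wf noeth a) => {}a _ IH.
case: (classic (exists n x0, ideal_up sigma a x0 /\ ~ C n x0)); last first.
  move=> none; apply: stable_on_const => n x upx.
  by apply: NNPP => nCx; apply: none; exists n, x.
move=> [n [x0 [[sx0 a_x0] nCx0]]].
have [k [ai [cover avoid]]] := ideal_closed_separate (C_closed n) sx0 nCx0.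
apply: (stable_on_cover C_decreasing (n := n)
  (Y' := fun x => exists i, ideal_up sigma (fun r => a r \/ ai i r) x)).
  move=> x [sx a_x] /cover [i [_ ai_x]]; exists i.
  by split=> // r [ar | air]; [exact: a_x | exact: ai_x].
apply: (stable_on_finite_union C_decreasing
  (Y := fun i => ideal_up sigma (fun r => a r \/ ai i r))) => i.
apply: stable_on_up_union IH _.
have [r [air nx0r]] : exists r, ai i r /\ ~ x0 r.
  apply: NNPP => none; apply: (avoid i); split=> // r air.
  by apply: NNPP => nx0r; apply: none; exists r.
by exists r; split=> // ar; apply/nx0r/a_x0.
Qed.

End IdealTopology.

Theorem corollary3p8 (S : comPzSemiRingType) :
  noetherian_semiring S ->
  forall sigma : (S -> Prop) -> Prop,
    (forall x, sigma x -> is_ideal x) ->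
    ideal_topology_noetherian sigma.
Proof.
move=> noeth sigma sigma_ideal C C_closed C_decreasing.
have [N stab] :=
  stable_on_ideal_up sigma_ideal C_closed C_decreasing noeth (fun _ => False).
exists N => n hn x; split; first exact: decreasing_le C_decreasing hn.
move=> CNx; apply: stab => //; split=> //.
exact: ideal_closed_sub (C_closed N) CNx.
Qed.
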